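(* Consider a market with $M$ consumers $\mathcal{M}=\{1,\dots,M\}$ and $N$ suppliers $\mathcal{N}=\{1,\dots,N\}$, constants $d_0>0$, $\kappa_0>0$ with $Md_0<N\kappa_0$. Assume: for each $i\in\mathcal{M}$, $U_i$ is concave, strictly increasing and continuously differentiable on $[d_0,\infty)$ with $U_i(d_0)=0$; for each $i\in\mathcal{N}$, $C_i:\mathbb{R}\to\mathbb{R}$ is convex, strictly increasing and continuously differentiable with $C_i(s)\ge0$ for $s\ge0$ and $C_i(s)=0$ for $s\le0$. Assume further that no supplier is pivotal: $\frac{(N-1)\kappa_0}{Md_0}>1$. Define the game $\mathcal{G}$ whose players are $\mathcal{M}\cup\mathcal{N}$; consumer $i$ chooses $\theta_d^i\ge0$ and supplier $i$ chooses $\theta_s^i\ge 0$. For a profile with $\sum_i\theta_d^i+\sum_i\theta_s^i>0$, the price is $p(\boldsymbol{\theta}_d,\boldsymbol{\theta}_s)=\frac{\sum_i\theta_d^i+\sum_i\theta_s^i}{N\kappa_0-Md_0}$ and the payoffs are $$\pi_d^i=U_i\!\left(d_0+\frac{\theta_d^i}{p}\right)-p\,d_0-\theta_d^i\ (i\in\mathcal{M}),\qquad \pi_s^i=p\,\kappa_0-\theta_s^i-C_i\!\left(\kappa_0-\frac{\theta_s^i}{p}\right)\ (i\in\mathcal{N}),$$ with $p=p(\boldsymbol{\theta}_d,\boldsymbol{\theta}_s)$; if all parameters are zero, by convention each consumer is allocated $d_0$, each supplier $\kappa_0$, and the price is $0$. Then $\mathcal{G}$ has a unique Nash equilibrium $(\tilde{\boldsymbol{\theta}}_d,\tilde{\boldsymbol{\theta}}_s)$.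 Moreover, writing $\tilde p=p(\tilde{\boldsymbol{\theta}}_d,\tilde{\boldsymbol{\theta}}_s)$, the allocation $\tilde d_i=d_0+\tilde\theta_d^i/\tilde p$ ($i\in\mathcal{M}$), $\tilde s_i=\kappa_0-\tilde\theta_s^i/\tilde p$ ($i\in\mathcal{N}$) is the unique solution of the convex program $$\max_{\mathbf{d},\mathbf{s}}\ \sum_{i=1}^M\tilde U_i(d_i)-\sum_{i=1}^N\tilde C_i(s_i)\quad\text{s.t.}\quad \sum_{i=1}^M d_i=\sum_{i=1}^N s_i,\ \ 0\le s_i\le\kappa_0\ (i\in\mathcal{N}),\ \ d_i\ge d_0\ (i\in\mathcal{M}),$$ where $$\tilde U_i(d_i)=\left(1-\frac{d_i}{N\kappa_0-(M-1)d_0}\right)U_i(d_i)+\frac{1}{N\kappa_0-(M-1)d_0}\int_{d_0}^{d_i}U_i(z)\,dz,$$ $$\tilde C_i(s_i)=\left(1+\frac{s_i}{(N-1)\kappa_0-Md_0}\right)C_i(s_i)-\frac{1}{(N-1)\kappa_0-Md_0}\int_0^{s_i}C_i(z)\,dz.$$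
   Context: A Nash equilibrium is a profile $(\tilde{\boldsymbol{\theta}}_d,\tilde{\boldsymbol{\theta}}_s)$ of nonnegative parameters such that no consumer and no supplier can strictly increase its own payoff by unilaterally changing its own parameter to another nonnegative value. *)

From Stdlib Require Import Reals.
From Coquelicot Require Import Coquelicot.
Open Scope R_scope.

(* sumR n f = f 0 + ... + f (n-1); players are indexed 0..n-1. *)
Fixpoint sumR (n : nat) (f : nat -> R) : R :=
  match n with O => 0 | S k => sumR k f + f k end.

Definition upd (f : nat -> R) (i : nat) (x : R) : nat -> R :=
  fun j => if Nat.eqb j i then x else f j.

Section Game.
Variables (M N : nat) (d0 k0 : R) (U C : nat -> R -> R).

Definition total (thd ths : nat -> R) : R := sumR M thd + sumR N ths.

Definition price (thd ths : nat -> R) : R :=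
  total thd ths / (INR N * k0 - INR M * d0).

Definition dalloc (thd ths : nat -> R) (i : nat) : R :=
  if Req_EM_T (total thd ths) 0 then d0 else d0 + thd i / price thd ths.

Definition salloc (thd ths : nat -> R) (i : nat) : R :=
  if Req_EM_T (total thd ths) 0 then k0 else k0 - ths i / price thd ths.

Definition pay_d (i : nat) (thd ths : nat -> R) : R :=
  U i (dalloc thd ths i) - price thd ths * d0 - thd i.

Definition pay_s (i : nat) (thd ths : nat -> R) : R :=
  price thd ths * k0 - ths i - C i (salloc thd ths i).

Definition is_NE (thd ths : nat -> R) : Prop :=
  (forall i, (i < M)%nat -> 0 <= thd i) /\
  (forall i, (i < N)%nat -> 0 <= ths i) /\
  (forall i, (i < M)%nat -> forall x, 0 <= x ->
      pay_d i (upd thd i x) ths <= pay_d i thd ths) /\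
  (forall i, (i < N)%nat -> forall x, 0 <= x ->
      pay_s i thd (upd ths i x) <= pay_s i thd ths).

Definition Utilde (i : nat) (d : R) : R :=
  (1 - d / (INR N * k0 - (INR M - 1) * d0)) * U i d
  + / (INR N * k0 - (INR M - 1) * d0) * RInt (U i) d0 d.

Definition Ctilde (i : nat) (s : R) : R :=
  (1 + s / ((INR N - 1) * k0 - INR M * d0)) * C i s
  - / ((INR N - 1) * k0 - INR M * d0) * RInt (C i) 0 s.

Definition feasible (d s : nat -> R) : Prop :=
  sumR M d = sumR N s /\
  (forall i, (i < N)%nat -> 0 <= s i <= k0) /\
  (forall i, (i < M)%nat -> d0 <= d i).

Definition objective (d s : nat -> R) : R :=
  sumR M (fun i => Utilde i (d i)) - sumR N (fun i => Ctilde i (s i)).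

Definition is_optimal (d s : nat -> R) : Prop :=
  feasible d s /\ forall d' s', feasible d' s' -> objective d' s' <= objective d s.
End Game.

Definition concave_on (D : R -> Prop) (f : R -> R) : Prop :=
  forall x y t, D x -> D y -> 0 <= t <= 1 ->
    t * f x + (1 - t) * f y <= f (t * x + (1 - t) * y).

Definition convex_on (D : R -> Prop) (f : R -> R) : Prop :=
  forall x y t, D x -> D y -> 0 <= t <= 1 ->
    f (t * x + (1 - t) * y) <= t * f x + (1 - t) * f y.

Definition strict_incr_on (D : R -> Prop) (f : R -> R) : Prop :=
  forall x y, D x -> D y -> x < y -> f x < f y.

Definition C1_on_halfline (a : R) (f : R -> R) : Prop :=
  exists f' : R -> R,
    (forall x, a < x -> is_derive f x (f' x)) /\
    filterlim (fun h => (f (a + h) - f a) / h) (at_right 0) (locally (f' a)) /\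
    (forall x, a <= x -> filterlim f' (within (fun y => a <= y) (locally x)) (locally (f' x))).

Definition C1_on_R (f : R -> R) : Prop :=
  (forall x, ex_derive f x) /\ (forall x, continuous (Derive f) x).

From Pilot Require Import Defs.
From Stdlib Require Import Reals Lra Lia ClassicalEpsilon Classical FunctionalExtensionality.
From Coquelicot Require Import Coquelicot.
Open Scope R_scope.

(* Write D = N k0 - M d0 (the price is the total bid divided by D), K = D + d0 and
   L = D - k0, which is positive because no supplier is pivotal.  If the other players
   bid T > 0 in total, a consumer bidding x receives d = d0 + D x / (T + x) at the price
   p = (T + x) / D, and the derivative of its payoff in x is K / (T + x) * (U~'(d) - p),
   where U~'(d) = (1 - d / K) U'(d) is strictly decreasing.  Symmetrically a supplier
   receives s = k0 - D x / (T + x) and its payoff has derivative L / (T + x) * (C~'(s) - p)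
   with C~'(s) = (1 + s / L) C'(s).  Hence best responses are exactly the conditions
   U~'_i(d_i) <= p (with equality if d_i > d0), C~'_j(s_j) <= p (with equality if
   s_j < k0), sum d = sum s, which are also the KKT conditions of the convex program,
   with p as multiplier.  This system has a solution by the intermediate value theorem
   applied to the excess demand at price p, and only one, since raising p lowers every
   demand and raises every supply.  In an equilibrium the total bid is positive and no
   player bids alone, so equilibria correspond exactly to solutions of the system through
   theta_d^i = p (d_i - d0) and theta_s^j = p (k0 - s_j). *)

Ltac case_Rle :=
  repeat match goal with
  | |- context [Rle_dec ?x ?y] => destruct (Rle_dec x y)
  | H : context [Rle_dec ?x ?y] |- _ => destruct (Rle_dec x y)
  end.

Lemma ball_R (x e y : R) : ball x e y <-> Rabs (y - x) < e.
Proof. reflexivity. Qed.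

Lemma derivable_pt_lim_pos_right (f : R -> R) x l :
  derivable_pt_lim f x l -> 0 < l -> exists y, x < y /\ f x < f y.
Proof.
  intros Hf Hl. destruct (Hf l Hl) as [d Hd]. pose proof (cond_pos d).
  assert (Hq : Rabs ((f (x + d / 2) - f x) / (d / 2) - l) < l)
    by (apply Hd; [lra | rewrite Rabs_pos_eq; lra]).
  apply Rabs_def2 in Hq as [_ Hq].
  exists (x + d / 2). split; [lra|].
  assert (E : f (x + d / 2) - f x = (f (x + d / 2) - f x) / (d / 2) * (d / 2)) by (field; lra).
  assert (0 < (f (x + d / 2) - f x) / (d / 2) * (d / 2)) by (apply Rmult_lt_0_compat; lra).
  lra.
Qed.

Lemma derivable_pt_lim_neg_left (f : R -> R) x l eta :
  derivable_pt_lim f x l -> l < 0 -> 0 < eta -> exists y, x - eta < y < x /\ f x < f y.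
Proof.
  intros Hf Hl He. destruct (Hf (- l) ltac:(lra)) as [d Hd]. pose proof (cond_pos d).
  set (h := Rmin (d / 2) (eta / 2)).
  assert (h <= d / 2) by apply Rmin_l. assert (h <= eta / 2) by apply Rmin_r.
  assert (0 < h) by (apply Rmin_glb_lt; lra).
  assert (Hq : Rabs ((f (x + - h) - f x) / - h - l) < - l)
    by (apply Hd; [lra | rewrite Rabs_Ropp, Rabs_pos_eq; lra]).
  apply Rabs_def2 in Hq as [Hq _].
  exists (x + - h). split; [lra|].
  assert (E : f (x + - h) - f x = - ((f (x + - h) - f x) / - h) * h) by (field; lra).
  assert (0 < - ((f (x + - h) - f x) / - h) * h) by (apply Rmult_lt_0_compat; lra).
  lra.
Qed.

Section ConcaveSlope.
Variables (f : R -> R) (a : R).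
Hypothesis Hf : concave_on (fun z => a <= z) f.

Lemma concave_slope_le_deriv x y l :
  derivable_pt_lim f x l -> a <= x -> x < y -> (f y - f x) / (y - x) <= l.
Proof.
  intros Hd Hax Hxy. set (S := (f y - f x) / (y - x)).
  apply Rnot_lt_le; intros Hl.
  destruct (Hd (S - l) ltac:(lra)) as [e He]. pose proof (cond_pos e).
  set (h := Rmin (e / 2) (y - x)).
  assert (h <= e / 2) by apply Rmin_l. assert (h <= y - x) by apply Rmin_r.
  assert (0 < h) by (apply Rmin_glb_lt; lra).
  assert (Hq : Rabs ((f (x + h) - f x) / h - l) < S - l)
    by (apply He; [lra | rewrite Rabs_pos_eq; lra]).
  apply Rabs_def2 in Hq as [Hq _].
  assert (Ht : 0 <= h / (y - x) <= 1)
    by (split; [apply Rdiv_le_0_compat | apply (Rdiv_le_1 h (y - x))]; lra).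
  assert (Hay : a <= y) by lra.
  pose proof (Hf y x (h / (y - x)) Hay Hax Ht) as Hc.
  replace (h / (y - x) * y + (1 - h / (y - x)) * x) with (x + h) in Hc by (field; lra).
  assert (S <= (f (x + h) - f x) / h); [|lra].
  apply Rmult_le_reg_r with h; [lra|].
  replace ((f (x + h) - f x) / h * h) with (f (x + h) - f x) by (field; lra).
  replace (S * h) with (h / (y - x) * (f y - f x)) by (unfold S; field; lra).
  lra.
Qed.

Lemma concave_deriv_le_slope x y l :
  derivable_pt_lim f y l -> a <= x -> x < y -> l <= (f y - f x) / (y - x).
Proof.
  intros Hd Hax Hxy. set (S := (f y - f x) / (y - x)).
  apply Rnot_lt_le; intros Hl.
  destruct (Hd (l - S) ltac:(lra)) as [e He]. pose proof (cond_pos e).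
  set (h := Rmin (e / 2) (y - x)).
  assert (h <= e / 2) by apply Rmin_l. assert (h <= y - x) by apply Rmin_r.
  assert (0 < h) by (apply Rmin_glb_lt; lra).
  assert (Hq : Rabs ((f (y + - h) - f y) / - h - l) < l - S)
    by (apply He; [lra | rewrite Rabs_Ropp, Rabs_pos_eq; lra]).
  apply Rabs_def2 in Hq as [_ Hq].
  assert (Ht : 0 <= h / (y - x) <= 1)
    by (split; [apply Rdiv_le_0_compat | apply (Rdiv_le_1 h (y - x))]; lra).
  assert (Hay : a <= y) by lra.
  pose proof (Hf x y (h / (y - x)) Hax Hay Ht) as Hc.
  replace (h / (y - x) * x + (1 - h / (y - x)) * y) with (y + - h) in Hc by (field; lra).
  assert ((f (y + - h) - f y) / - h <= S); [|lra].
  apply Rmult_le_reg_r with h; [lra|].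
  replace ((f (y + - h) - f y) / - h * h) with (f y - f (y + - h)) by (field; lra).
  replace (S * h) with (h / (y - x) * (f y - f x)) by (unfold S; field; lra).
  lra.
Qed.

End ConcaveSlope.

Lemma convex_opp_concave (f : R -> R) a :
  convex_on (fun _ => True) f -> concave_on (fun z => a <= z) (fun z => - f z).
Proof. intros Hf x y t _ _ Ht. specialize (Hf x y t I I Ht). lra. Qed.

Lemma nonincr_continuity_pt (F : R -> R) l0 :
  (forall l m, l <= m -> F m <= F l) ->
  (forall eps, 0 < eps -> exists l1, l0 < l1 /\ F l0 - eps < F l1) ->
  (forall eps, 0 < eps -> exists l2, l2 < l0 /\ F l2 < F l0 + eps) ->
  continuity_pt F l0.
Proof.
  intros Hmono Hright Hleft.
  unfold continuity_pt, continue_in, limit1_in, limit_in; simpl; unfold R_dist.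
  intros eps Heps.
  destruct (Hright eps Heps) as [l1 [H1 F1]]. destruct (Hleft eps Heps) as [l2 [H2 F2]].
  exists (Rmin (l1 - l0) (l0 - l2)). split; [apply Rmin_glb_lt; lra|].
  intros l [_ Hl].
  assert (Rmin (l1 - l0) (l0 - l2) <= l1 - l0) by apply Rmin_l.
  assert (Rmin (l1 - l0) (l0 - l2) <= l0 - l2) by apply Rmin_r.
  apply Rabs_def2 in Hl as [Hl Hl'].
  assert (F l1 <= F l) by (apply Hmono; lra). assert (F l <= F l2) by (apply Hmono; lra).
  apply Rabs_def1; lra.
Qed.

Section ClampedInverse.
Variables (f : R -> R) (a b : R).
Hypothesis Hf : continuity f.
Hypothesis Hab : a < b.
Hypothesis Hdecr : forall x y, a <= x -> x < y -> y <= b -> f y < f x.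

Definition clamp (l : R) : R := Rmax (f b) (Rmin (f a) l).

Definition clamp_inv (l : R) : R :=
  epsilon (inhabits a) (fun x => a <= x <= b /\ f x = clamp l).

Lemma f_nonincr x y : a <= x -> x <= y -> y <= b -> f y <= f x.
Proof. intros. destruct (Req_dec x y) as [->|]; [lra|]. left; apply Hdecr; lra. Qed.

Lemma fb_lt_fa : f b < f a.
Proof. apply Hdecr; lra. Qed.

Lemma clamp_inv_spec l : a <= clamp_inv l <= b /\ f (clamp_inv l) = clamp l.
Proof.
  unfold clamp_inv. apply epsilon_spec. pose proof fb_lt_fa.
  destruct (IVT_gen f a b (clamp l) Hf) as [x Hx].
  - rewrite Rmin_right, Rmax_left by lra. unfold clamp, Rmax, Rmin. case_Rle; lra.
  - rewrite Rmin_left, Rmax_right in Hx by lra. exists x. exact Hx.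
Qed.

Lemma clamp_inv_f x : a <= x <= b -> clamp_inv (f x) = x.
Proof.
  intros Hx. destruct (clamp_inv_spec (f x)) as [Hy E].
  assert (f b <= f x) by (apply f_nonincr; lra).
  assert (f x <= f a) by (apply f_nonincr; lra).
  assert (Ec : clamp (f x) = f x) by (unfold clamp, Rmax, Rmin; case_Rle; lra).
  rewrite Ec in E.
  destruct (Rtotal_order (clamp_inv (f x)) x) as [Hlt|[Heq|Hgt]]; [|exact Heq|].
  - assert (f x < f (clamp_inv (f x))) by (apply Hdecr; lra). lra.
  - assert (f (clamp_inv (f x)) < f x) by (apply Hdecr; lra). lra.
Qed.

Lemma clamp_inv_nonincr l m : l <= m -> clamp_inv m <= clamp_inv l.
Proof.
  intros Hlm. destruct (clamp_inv_spec l) as [Hl El]. destruct (clamp_inv_spec m) as [Hm Em].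
  apply Rnot_lt_le; intros Hlt.
  assert (Hc : f (clamp_inv m) < f (clamp_inv l)) by (apply Hdecr; lra).
  rewrite El, Em in Hc. unfold clamp, Rmax, Rmin in Hc. case_Rle; lra.
Qed.

Lemma clamp_inv_right l0 eps : 0 < eps -> exists l1, l0 < l1 /\ clamp_inv l0 - eps < clamp_inv l1.
Proof.
  intros He. destruct (clamp_inv_spec l0) as [Hx0 E0].
  destruct (Rlt_or_le (clamp_inv l0 - eps / 2) a) as [Hlt|Hge].
  - exists (l0 + 1). split; [lra|]. destruct (clamp_inv_spec (l0 + 1)) as [H _]. lra.
  - set (y := clamp_inv l0 - eps / 2).
    assert (Hy : f (clamp_inv l0) < f y) by (apply Hdecr; unfold y; lra).
    assert (f y <= f a) by (apply f_nonincr; unfold y; lra).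
    exists (f y). split.
    + rewrite E0 in Hy. unfold clamp, Rmax, Rmin in Hy. case_Rle; lra.
    + rewrite clamp_inv_f by (unfold y; lra). unfold y; lra.
Qed.

Lemma clamp_inv_left l0 eps : 0 < eps -> exists l2, l2 < l0 /\ clamp_inv l2 < clamp_inv l0 + eps.
Proof.
  intros He. destruct (clamp_inv_spec l0) as [Hx0 E0].
  destruct (Rlt_or_le b (clamp_inv l0 + eps / 2)) as [Hlt|Hle].
  - exists (l0 - 1). split; [lra|]. destruct (clamp_inv_spec (l0 - 1)) as [H _]. lra.
  - set (y := clamp_inv l0 + eps / 2).
    assert (Hy : f y < f (clamp_inv l0)) by (apply Hdecr; unfold y; lra).
    assert (f b <= f y) by (apply f_nonincr; unfold y; lra).
    exists (f y). split.
    + rewrite E0 in Hy. unfold clamp, Rmax, Rmin in Hy. case_Rle; lra.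
    + rewrite clamp_inv_f by (unfold y; lra). unfold y; lra.
Qed.

Lemma clamp_inv_continuity : continuity clamp_inv.
Proof.
  intros l0. apply nonincr_continuity_pt;
    [exact clamp_inv_nonincr | apply clamp_inv_right | apply clamp_inv_left].
Qed.

Lemma clamp_inv_above l : f b < l ->
  a <= clamp_inv l < b /\ f (clamp_inv l) <= l /\ (a < clamp_inv l -> f (clamp_inv l) = l).
Proof.
  intros Hl. destruct (clamp_inv_spec l) as [[H1 H2] E]. pose proof fb_lt_fa.
  assert (f (clamp_inv l) <= l /\ f b < f (clamp_inv l))
    by (rewrite E; unfold clamp, Rmax, Rmin; case_Rle; lra).
  split; [split; [lra|] | split; [lra|]].
  - apply Rnot_le_lt; intros Hb. assert (clamp_inv l = b) as Eb by lra. rewrite Eb in *. lra.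
  - intros Ha. assert (f (clamp_inv l) < f a) by (apply Hdecr; lra).
    rewrite E in *. unfold clamp, Rmax, Rmin in *. case_Rle; lra.
Qed.

Lemma clamp_inv_below l : l < f a ->
  a < clamp_inv l <= b /\ l <= f (clamp_inv l) /\ (clamp_inv l < b -> f (clamp_inv l) = l).
Proof.
  intros Hl. destruct (clamp_inv_spec l) as [[H1 H2] E]. pose proof fb_lt_fa.
  assert (l <= f (clamp_inv l) /\ f (clamp_inv l) < f a)
    by (rewrite E; unfold clamp, Rmax, Rmin; case_Rle; lra).
  split; [split; [|lra] | split; [lra|]].
  - apply Rnot_le_lt; intros Ha. assert (clamp_inv l = a) as Ea by lra. rewrite Ea in *. lra.
  - intros Hb. assert (f b < f (clamp_inv l)) by (apply Hdecr; lra).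
    rewrite E in *. unfold clamp, Rmax, Rmin in *. case_Rle; lra.
Qed.

Lemma clamp_inv_ge l : f a <= l -> clamp_inv l = a.
Proof.
  intros Hl. destruct (clamp_inv_spec l) as [[H1 H2] E]. pose proof fb_lt_fa.
  apply Rle_antisym; [|exact H1]. apply Rnot_lt_le; intros Ha.
  assert (f (clamp_inv l) < f a) by (apply Hdecr; lra).
  rewrite E in *. unfold clamp, Rmax, Rmin in *. case_Rle; lra.
Qed.

Lemma clamp_inv_le l : l <= f b -> clamp_inv l = b.
Proof.
  intros Hl. destruct (clamp_inv_spec l) as [[H1 H2] E]. pose proof fb_lt_fa.
  apply Rle_antisym; [exact H2|]. apply Rnot_lt_le; intros Hb.
  assert (f b < f (clamp_inv l)) by (apply Hdecr; lra).
  rewrite E in *. unfold clamp, Rmax, Rmin in *. case_Rle; lra.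
Qed.

End ClampedInverse.

Definition C1_halfline_deriv (a : R) (f f' : R -> R) : Prop :=
  (forall x, a < x -> is_derive f x (f' x)) /\
  filterlim (fun h => (f (a + h) - f a) / h) (at_right 0) (locally (f' a)) /\
  (forall x, a <= x -> filterlim f' (within (fun y => a <= y) (locally x)) (locally (f' x))).

Lemma filterlim_Rmax_within (a x : R) :
  filterlim (Rmax a) (locally x) (within (fun y => a <= y) (locally (Rmax a x))).
Proof.
  intros P [e HP]. pose proof (cond_pos e). exists e. intros y Hy. apply HP; [|apply Rmax_l].
  apply ball_R in Hy. apply ball_R. apply Rabs_def2 in Hy.
  change (minus y x) with (y - x) in Hy.
  unfold Rmax; case_Rle; apply Rabs_def1; lra.
Qed.

(* [U] is only right-differentiable at [a]; continuing it by its tangent line there makes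
   it differentiable on all of R, as the mean value theorem and [auto_derive] require. *)
Section LeftLinearExtension.
Variables (U U' : R -> R) (a : R).
Hypothesis HU : C1_halfline_deriv a U U'.

Definition lin_ext (x : R) : R := if Rle_dec a x then U x else U a + U' a * (x - a).
Definition lin_ext' (x : R) : R := U' (Rmax a x).

Lemma lin_ext_eq x : a <= x -> lin_ext x = U x.
Proof. intros. unfold lin_ext. case_Rle; [reflexivity|lra]. Qed.

Lemma lin_ext'_eq x : a <= x -> lin_ext' x = U' x.
Proof. intros. unfold lin_ext'. rewrite Rmax_right by lra. reflexivity. Qed.

Lemma lin_ext_deriv x : derivable_pt_lim lin_ext x (lin_ext' x).
Proof.
  destruct HU as [HUd [HUa _]].
  destruct (Rtotal_order x a) as [Hx|[->|Hx]].
  - apply is_derive_Reals. unfold lin_ext'. rewrite Rmax_left by lra.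
    apply is_derive_ext_loc with (f := fun y => U a + U' a * (y - a)).
    + apply (filter_imp (fun y => y < a)); [|exact (open_lt a x Hx)].
      intros y Hy. unfold lin_ext. case_Rle; [lra|reflexivity].
    + auto_derive; [auto|ring].
  - intros eps Heps.
    destruct (proj1 (filterlim_locally _ _) HUa (mkposreal _ Heps)) as [d Hd].
    exists d. intros h Hh0 Hh.
    rewrite lin_ext'_eq, (lin_ext_eq a) by lra.
    destruct (Rlt_or_le h 0) as [Hn|Hp].
    + unfold lin_ext. case_Rle; [lra|].
      replace ((U a + U' a * (a + h - a) - U a) / h - U' a) with 0 by (field; lra).
      rewrite Rabs_R0; lra.
    + rewrite lin_ext_eq by lra. apply ball_R, (Hd h); [apply ball_R; rewrite Rminus_0_r|]; lra.
  - apply is_derive_Reals. rewrite lin_ext'_eq by lra.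
    apply is_derive_ext_loc with (f := U); [|apply HUd; lra].
    apply (filter_imp (fun y => a < y)); [|exact (open_gt a x Hx)].
    intros y Hy. symmetry. apply lin_ext_eq. lra.
Qed.

Lemma lin_ext'_continuity : continuity lin_ext'.
Proof.
  destruct HU as [_ [_ HU'c]].
  intros x. apply continuity_pt_filterlim. unfold lin_ext'.
  eapply filterlim_comp; [apply filterlim_Rmax_within | apply HU'c, Rmax_l].
Qed.

End LeftLinearExtension.

Section HalflineArgmax.
Variables (P P' G : R -> R).
Hypothesis HP : forall x, 0 <= x -> derivable_pt_lim P x (P' x).
Hypothesis HP'G : forall x, 0 <= x -> exists c, 0 < c /\ P' x = c * G x.
Hypothesis HG : forall x y, 0 <= x -> x < y -> G y < G x.

Lemma deriv_pos_of_G x : 0 <= x -> 0 < G x -> 0 < P' x.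
Proof.
  intros Hx HGx. destruct (HP'G x Hx) as [c [Hc ->]]. apply Rmult_lt_0_compat; lra.
Qed.

Lemma deriv_neg_of_G x : 0 <= x -> G x < 0 -> P' x < 0.
Proof.
  intros Hx HGx. destruct (HP'G x Hx) as [c [Hc ->]].
  assert (0 < c * - G x) by (apply Rmult_lt_0_compat; lra). lra.
Qed.

Lemma halfline_argmax_iff t : 0 <= t ->
  (forall x, 0 <= x -> P x <= P t) <-> G t <= 0 /\ (0 < t -> G t = 0).
Proof.
  intros Ht. split.
  - intros Hmax.
    assert (HGt : G t <= 0).
    { apply Rnot_lt_le; intros HGt.
      destruct (derivable_pt_lim_pos_right P t (P' t) (HP t Ht) (deriv_pos_of_G t Ht HGt))
        as [y [Hy Hy']].
      specialize (Hmax y ltac:(lra)). lra. }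
    split; [exact HGt|]. intros Ht0. apply Rle_antisym; [exact HGt|].
    apply Rnot_lt_le; intros HGt'.
    destruct (derivable_pt_lim_neg_left P t (P' t) t (HP t Ht) (deriv_neg_of_G t Ht HGt') Ht0)
      as [y [Hy Hy']].
    specialize (Hmax y ltac:(lra)). lra.
  - intros [HGt HGt0] x Hx.
    destruct (Rtotal_order x t) as [Hlt|[->|Hgt]]; [|lra|].
    + destruct (MVT_cor2 P P' x t Hlt (fun c Hc => HP c ltac:(lra))) as [c [E Hc]].
      assert (G t < G c) by (apply HG; lra).
      assert (0 < P' c) by (apply deriv_pos_of_G; [lra|]; rewrite <- HGt0 by lra; lra).
      assert (0 < P' c * (t - x)) by (apply Rmult_lt_0_compat; lra). lra.
    + destruct (MVT_cor2 P P' t x Hgt (fun c Hc => HP c ltac:(lra))) as [c [E Hc]].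
      assert (G c < G t) by (apply HG; lra).
      assert (P' c < 0) by (apply deriv_neg_of_G; lra).
      assert (0 < - P' c * (x - t)) by (apply Rmult_lt_0_compat; lra). lra.
Qed.

End HalflineArgmax.

Lemma deriv_decr_tangent_lt (F f : R -> R) a b x y :
  (forall z, a <= z <= b -> derivable_pt_lim F z (f z)) ->
  (forall u v, a <= u -> u < v -> v <= b -> f v < f u) ->
  a <= x <= b -> a <= y <= b -> y <> x -> F y < F x + f x * (y - x).
Proof.
  intros HF Hf Hx Hy Hne.
  destruct (Rtotal_order x y) as [Hxy|[Heq|Hyx]]; [|congruence|].
  - destruct (MVT_cor2 F f x y Hxy (fun c Hc => HF c ltac:(lra))) as [c [E Hc]].
    assert (f c < f x) by (apply Hf; lra).
    assert (0 < (f x - f c) * (y - x)) by (apply Rmult_lt_0_compat; lra). lra.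
  - destruct (MVT_cor2 F f y x Hyx (fun c Hc => HF c ltac:(lra))) as [c [E Hc]].
    assert (f x < f c) by (apply Hf; lra).
    assert (0 < (f c - f x) * (x - y)) by (apply Rmult_lt_0_compat; lra). lra.
Qed.

Lemma kkt_lower_support (F f : R -> R) a b x p y :
  (forall z, a <= z <= b -> derivable_pt_lim F z (f z)) ->
  (forall u v, a <= u -> u < v -> v <= b -> f v < f u) ->
  a <= x <= b -> f x <= p -> (a < x -> f x = p) -> a <= y <= b -> y <> x ->
  F y < F x + p * (y - x).
Proof.
  intros HF Hf Hx Hfp Hfp' Hy Hne.
  pose proof (deriv_decr_tangent_lt F f a b x y HF Hf Hx Hy Hne) as Ht.
  destruct (Rtotal_order x y) as [Hxy|[->|Hyx]]; [|congruence|].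
  - assert (0 <= (p - f x) * (y - x)) by (apply Rmult_le_pos; lra). lra.
  - rewrite <- Hfp' by lra. exact Ht.
Qed.

Lemma kkt_upper_support (F f : R -> R) a b x p y :
  (forall z, a <= z <= b -> derivable_pt_lim F z (f z)) ->
  (forall u v, a <= u -> u < v -> v <= b -> f u < f v) ->
  a <= x <= b -> f x <= p -> (x < b -> f x = p) -> a <= y <= b -> y <> x ->
  F x + p * (y - x) < F y.
Proof.
  intros HF Hf Hx Hfp Hfp' Hy Hne.
  assert (Ht : - F y < - F x + - f x * (y - x)).
  { apply (deriv_decr_tangent_lt (fun z => - F z) (fun z => - f z) a b); auto.
    - intros z Hz. apply derivable_pt_lim_opp, HF, Hz.
    - intros u v Hu Huv Hv. specialize (Hf u v Hu Huv Hv). lra. }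
  destruct (Rtotal_order x y) as [Hxy|[->|Hyx]]; [|congruence|].
  - rewrite <- Hfp' by lra. lra.
  - assert (0 <= (p - f x) * (x - y)) by (apply Rmult_le_pos; lra). lra.
Qed.

Lemma sumR_ext n f g : (forall i, (i < n)%nat -> f i = g i) -> sumR n f = sumR n g.
Proof.
  induction n as [|n IH]; intros H; simpl; [reflexivity|].
  rewrite IH by (intros; apply H; lia). rewrite H by lia. reflexivity.
Qed.

Lemma sumR_plus n f g : sumR n (fun i => f i + g i) = sumR n f + sumR n g.
Proof. induction n as [|n IH]; simpl; [ring|]. rewrite IH. ring. Qed.

Lemma sumR_minus n f g : sumR n (fun i => f i - g i) = sumR n f - sumR n g.
Proof. induction n as [|n IH]; simpl; [ring|]. rewrite IH. ring. Qed.

Lemma sumR_scal n c f : sumR n (fun i => c * f i) = c * sumR n f.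
Proof. induction n as [|n IH]; simpl; [ring|]. rewrite IH. ring. Qed.

Lemma sumR_const n c : sumR n (fun _ => c) = INR n * c.
Proof. induction n as [|n IH]; simpl sumR; [simpl; ring|]. rewrite IH, S_INR. ring. Qed.

Lemma sumR_le n f g : (forall i, (i < n)%nat -> f i <= g i) -> sumR n f <= sumR n g.
Proof.
  induction n as [|n IH]; intros H; simpl; [lra|].
  assert (f n <= g n) by (apply H; lia).
  assert (sumR n f <= sumR n g) by (apply IH; intros; apply H; lia). lra.
Qed.

Lemma sumR_nonneg n f : (forall i, (i < n)%nat -> 0 <= f i) -> 0 <= sumR n f.
Proof.
  intros H. replace 0 with (sumR n (fun _ => 0)) by (rewrite sumR_const; ring).
  apply sumR_le, H.
Qed.

Lemma sumR_ge_term n f i : (forall j, (j < n)%nat -> 0 <= f j) -> (i < n)%nat -> f i <= sumR n f.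
Proof.
  induction n as [|n IH]; intros H Hi; simpl; [lia|].
  assert (0 <= f n) by (apply H; lia).
  destruct (Nat.eq_dec i n) as [->|Hne].
  - assert (0 <= sumR n f) by (apply sumR_nonneg; intros; apply H; lia). lra.
  - assert (f i <= sumR n f) by (apply IH; [intros; apply H|]; lia). lra.
Qed.

Lemma sumR_ge_term_lb n f c i : (forall j, (j < n)%nat -> c <= f j) -> (i < n)%nat ->
  f i + (INR n - 1) * c <= sumR n f.
Proof.
  intros H Hi.
  assert (f i - c <= sumR n (fun j => f j - c))
    by (apply (sumR_ge_term n (fun j => f j - c));
        [intros j Hj; specialize (H j Hj); lra | exact Hi]).
  rewrite sumR_minus, sumR_const in H0. lra.
Qed.

Lemma sumR_eq_of_le n f f' : (forall i, (i < n)%nat -> f i <= f' i) -> sumR n f = sumR n f' ->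
  forall i, (i < n)%nat -> f i = f' i.
Proof.
  intros H E i Hi.
  assert (f' i - f i <= sumR n (fun j => f' j - f j))
    by (apply (sumR_ge_term n (fun j => f' j - f j));
        [intros j Hj; specialize (H j Hj); lra | exact Hi]).
  rewrite sumR_minus in H0. specialize (H i Hi). lra.
Qed.

Lemma upd_same (f : nat -> R) i x : upd f i x i = x.
Proof. unfold upd. rewrite Nat.eqb_refl. reflexivity. Qed.

Lemma sumR_upd n f i x : (i < n)%nat -> sumR n (upd f i x) = sumR n f - f i + x.
Proof.
  induction n as [|n IH]; simpl; intros Hi; [lia|].
  destruct (Nat.eq_dec i n) as [->|Hne].
  - rewrite upd_same, (sumR_ext n (upd f n x) f); [ring|].
    intros j Hj. unfold upd. destruct (Nat.eqb_spec j n); [lia|reflexivity].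
  - rewrite IH by lia. unfold upd. destruct (Nat.eqb_spec n i); [lia|ring].
Qed.

Lemma sumR_continuity n (F : nat -> R -> R) :
  (forall i, (i < n)%nat -> continuity (F i)) -> continuity (fun l => sumR n (fun i => F i l)).
Proof.
  induction n as [|n IH]; intros H; simpl.
  - apply continuity_const. intros ? ?; reflexivity.
  - apply (continuity_plus (fun l => sumR n (fun i => F i l)) (F n));
      [apply IH; intros; apply H | apply H]; lia.
Qed.

Lemma finite_choice {A : Type} (a : A) n (P : nat -> A -> Prop) :
  (forall i, (i < n)%nat -> exists x, P i x) ->
  exists F : nat -> A, forall i, (i < n)%nat -> P i (F i).
Proof.
  intros H.
  exists (fun i => match Compare_dec.lt_dec i n with
                   | left Hi => proj1_sig (constructive_indefinite_description _ (H i Hi))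
                   | right _ => a end).
  intros i Hi. destruct (Compare_dec.lt_dec i n) as [Hi'|]; [|lia].
  exact (proj2_sig (constructive_indefinite_description _ (H i Hi'))).
Qed.

Lemma finite_upper_bound n (f : nat -> R) : exists B, forall i, (i < n)%nat -> f i <= B.
Proof.
  induction n as [|n [B HB]]; [exists 0; intros; lia|].
  exists (Rmax B (f n)). intros i Hi.
  destruct (Nat.eq_dec i n) as [->|Hne]; [apply Rmax_r|].
  apply Rle_trans with B; [apply HB; lia | apply Rmax_l].
Qed.

Section KKTSystem.
Variables (M N : nat) (d0 K k0 : R) (g h : nat -> R -> R).
Hypothesis Hg : forall i, (i < M)%nat -> forall x y, d0 <= x -> x < y -> y <= K -> g i y < g i x.
Hypothesis Hh : forall j, (j < N)%nat -> forall x y, 0 <= x -> x < y -> y <= k0 -> h j x < h j y.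
Hypothesis Hcap : INR M * d0 < INR N * k0.

Definition market_kkt (p : R) (d s : nat -> R) : Prop :=
  0 < p /\ sumR M d = sumR N s /\
  (forall i, (i < M)%nat -> d0 <= d i <= K /\ g i (d i) <= p /\ (d0 < d i -> g i (d i) = p)) /\
  (forall j, (j < N)%nat -> 0 <= s j <= k0 /\ h j (s j) <= p /\ (s j < k0 -> h j (s j) = p)).

(* A higher price lowers every demand and raises every supply; market clearing forces equality. *)
Lemma kkt_alloc_eq_of_price_le p d s p' d' s' :
  market_kkt p d s -> market_kkt p' d' s' -> p <= p' ->
  (forall i, (i < M)%nat -> d i = d' i) /\ (forall j, (j < N)%nat -> s j = s' j).
Proof.
  intros [_ [HS [Hd Hs]]] [_ [HS' [Hd' Hs']]] Hpp.
  assert (Cd : forall i, (i < M)%nat -> d' i <= d i).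
  { intros i Hi. apply Rnot_lt_le; intros Hlt.
    destruct (Hd i Hi) as [[B1 B2] [G1 G2]]. destruct (Hd' i Hi) as [[B1' B2'] [G1' G2']].
    assert (g i (d' i) < g i (d i)) by (apply (Hg i Hi); lra).
    rewrite G2' in H by lra. lra. }
  assert (Cs : forall j, (j < N)%nat -> s j <= s' j).
  { intros j Hj. apply Rnot_lt_le; intros Hlt.
    destruct (Hs j Hj) as [[B1 B2] [G1 G2]]. destruct (Hs' j Hj) as [[B1' B2'] [G1' G2']].
    assert (h j (s' j) < h j (s j)) by (apply (Hh j Hj); lra).
    rewrite G2' in H by lra. lra. }
  pose proof (sumR_le M _ _ Cd). pose proof (sumR_le N _ _ Cs).
  split; intros i Hi.
  - symmetry. apply (sumR_eq_of_le M d' d Cd); [lra | exact Hi].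
  - apply (sumR_eq_of_le N s s' Cs); [lra | exact Hi].
Qed.

(* Some consumer is above [d0] or some supplier is below [k0], and its condition pins the price. *)
Lemma kkt_price_eq p p' d s : market_kkt p d s -> market_kkt p' d s -> p = p'.
Proof.
  intros [_ [HS [Hd Hs]]] [_ [_ [Hd' Hs']]].
  destruct (classic (exists j, (j < N)%nat /\ s j < k0)) as [[j [Hj Hsj]]|Hno].
  - destruct (Hs j Hj) as [_ [_ G]]. destruct (Hs' j Hj) as [_ [_ G']].
    rewrite <- (G Hsj), <- (G' Hsj). reflexivity.
  - destruct (classic (exists i, (i < M)%nat /\ d0 < d i)) as [[i [Hi Hdi]]|Hno'].
    + destruct (Hd i Hi) as [_ [_ G]]. destruct (Hd' i Hi) as [_ [_ G']].
      rewrite <- (G Hdi), <- (G' Hdi). reflexivity.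
    + exfalso.
      assert (sumR M d <= sumR M (fun _ => d0)).
      { apply sumR_le. intros i Hi. apply Rnot_lt_le. intros Hlt. apply Hno'. eauto. }
      assert (sumR N (fun _ => k0) <= sumR N s).
      { apply sumR_le. intros j Hj. apply Rnot_lt_le. intros Hlt. apply Hno. eauto. }
      rewrite !sumR_const in *. lra.
Qed.

Lemma kkt_unique p d s p' d' s' : market_kkt p d s -> market_kkt p' d' s' ->
  p = p' /\ (forall i, (i < M)%nat -> d i = d' i) /\ (forall j, (j < N)%nat -> s j = s' j).
Proof.
  intros H H'.
  assert (Ealloc : (forall i, (i < M)%nat -> d i = d' i) /\ (forall j, (j < N)%nat -> s j = s' j)).
  { destruct (Rle_dec p p') as [Hle|Hgt].
    - exact (kkt_alloc_eq_of_price_le p d s p' d' s' H H' Hle).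
    - destruct (kkt_alloc_eq_of_price_le p' d' s' p d s H' H ltac:(lra)) as [Ed Es].
      split; intros; symmetry; auto. }
  split; [|exact Ealloc]. destruct Ealloc as [Ed Es].
  apply (kkt_price_eq p p' d s H).
  destruct H' as [Hp' [HS' [Hd' Hs']]].
  split; [exact Hp'|split; [|split]].
  - rewrite (sumR_ext M d d'), (sumR_ext N s s'); assumption.
  - intros i Hi. rewrite Ed by exact Hi. exact (Hd' i Hi).
  - intros j Hj. rewrite Es by exact Hj. exact (Hs' j Hj).
Qed.

Hypothesis Hg_cont : forall i, (i < M)%nat -> continuity (g i).
Hypothesis Hh_cont : forall j, (j < N)%nat -> continuity (h j).
Hypothesis Hg_K : forall i, (i < M)%nat -> g i K = 0.
Hypothesis Hh_0 : forall j, (j < N)%nat -> h j 0 = 0.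
Hypothesis HM : (0 < M)%nat.
Hypothesis Hd0K : 0 < d0 < K.
Hypothesis Hk0 : 0 < k0.

Definition demand (i : nat) (l : R) : R := clamp_inv (g i) d0 K l.
Definition supply (j : nat) (l : R) : R := clamp_inv (fun s => - h j s) 0 k0 (- l).
Definition excess (l : R) : R := sumR M (fun i => demand i l) - sumR N (fun j => supply j l).

Lemma h_opp_decr j : (j < N)%nat -> forall x y, 0 <= x -> x < y -> y <= k0 -> - h j y < - h j x.
Proof. intros Hj x y Hx Hxy Hy. specialize (Hh j Hj x y Hx Hxy Hy). lra. Qed.

Lemma h_opp_continuity j : (j < N)%nat -> continuity (fun s => - h j s).
Proof. intros Hj x. apply continuity_pt_opp, Hh_cont, Hj. Qed.

Lemma demand_kkt i l : (i < M)%nat -> 0 < l ->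
  d0 <= demand i l <= K /\ g i (demand i l) <= l /\ (d0 < demand i l -> g i (demand i l) = l).
Proof.
  intros Hi Hl.
  destruct (clamp_inv_above (g i) d0 K (Hg_cont i Hi) ltac:(lra) (Hg i Hi) l) as [B [G1 G2]];
    [rewrite (Hg_K i Hi); lra|].
  unfold demand. repeat split; auto; lra.
Qed.

Lemma supply_kkt j l : (j < N)%nat -> 0 < l ->
  0 <= supply j l <= k0 /\ h j (supply j l) <= l /\ (supply j l < k0 -> h j (supply j l) = l).
Proof.
  intros Hj Hl.
  destruct (clamp_inv_below _ 0 k0 (h_opp_continuity j Hj) Hk0 (h_opp_decr j Hj) (- l))
    as [B [G1 G2]]; [rewrite (Hh_0 j Hj); lra|].
  unfold supply. repeat split; lra.
Qed.

Lemma excess_continuity : continuity excess.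
Proof.
  intros l. unfold excess.
  apply (continuity_pt_minus (fun l => sumR M (fun i => demand i l))
                             (fun l => sumR N (fun j => supply j l))).
  - apply (sumR_continuity M demand). intros i Hi.
    exact (clamp_inv_continuity (g i) d0 K (Hg_cont i Hi) ltac:(lra) (Hg i Hi)).
  - apply (sumR_continuity N supply). intros j Hj y. unfold supply.
    apply (continuity_pt_comp Ropp (clamp_inv _ 0 k0)).
    + apply continuity_pt_opp, continuity_pt_id.
    + exact (clamp_inv_continuity _ 0 k0 (h_opp_continuity j Hj) Hk0 (h_opp_decr j Hj) (- y)).
Qed.

Lemma excess_0 : 0 < excess 0.
Proof.
  unfold excess.
  assert (Ed : sumR M (fun i => demand i 0) = sumR M (fun _ => K)).
  { apply sumR_ext. intros i Hi.
    apply (clamp_inv_le (g i) d0 K (Hg_cont i Hi) ltac:(lra) (Hg i Hi)).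
    rewrite Hg_K by exact Hi. lra. }
  assert (Es : sumR N (fun j => supply j 0) = sumR N (fun _ => 0)).
  { apply sumR_ext. intros j Hj.
    apply (clamp_inv_ge _ 0 k0 (h_opp_continuity j Hj) Hk0 (h_opp_decr j Hj)).
    rewrite Hh_0 by exact Hj. lra. }
  rewrite Ed, Es, !sumR_const.
  assert (0 < INR M) by (apply lt_0_INR; exact HM). nra.
Qed.

Lemma excess_eventually_neg : exists l, 0 < l /\ excess l < 0.
Proof.
  destruct (finite_upper_bound M (fun i => g i d0)) as [Bg HBg].
  destruct (finite_upper_bound N (fun j => h j k0)) as [Bh HBh].
  set (l := Rmax 1 (Rmax Bg Bh)).
  assert (1 <= l) by apply Rmax_l.
  assert (Hlg : Bg <= l) by (eapply Rle_trans; [apply Rmax_l | apply Rmax_r]).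
  assert (Hlh : Bh <= l) by (eapply Rle_trans; [apply Rmax_r | apply Rmax_r]).
  exists l. split; [lra|]. unfold excess.
  assert (Ed : sumR M (fun i => demand i l) = sumR M (fun _ => d0)).
  { apply sumR_ext. intros i Hi.
    apply (clamp_inv_ge (g i) d0 K (Hg_cont i Hi) ltac:(lra) (Hg i Hi)).
    specialize (HBg i Hi). lra. }
  assert (Es : sumR N (fun j => supply j l) = sumR N (fun _ => k0)).
  { apply sumR_ext. intros j Hj.
    apply (clamp_inv_le _ 0 k0 (h_opp_continuity j Hj) Hk0 (h_opp_decr j Hj)).
    specialize (HBh j Hj). lra. }
  rewrite Ed, Es, !sumR_const. lra.
Qed.

Lemma kkt_exists : exists p d s, market_kkt p d s.
Proof.
  destruct excess_eventually_neg as [l [Hl Hneg]]. pose proof excess_0.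
  destruct (IVT_gen excess 0 l 0 excess_continuity) as [p [Hp E]].
  { rewrite Rmin_right, Rmax_left by lra. lra. }
  rewrite Rmin_left, Rmax_right in Hp by lra.
  assert (Hp0 : 0 < p) by (destruct (Req_dec p 0) as [E0|]; [rewrite E0 in E|]; lra).
  exists p, (fun i => demand i p), (fun j => supply j p).
  split; [exact Hp0 | split; [unfold excess in E; lra | split]].
  - intros i Hi. exact (demand_kkt i p Hi Hp0).
  - intros j Hj. exact (supply_kkt j p Hj Hp0).
Qed.

End KKTSystem.

Section Welfare.
Variables (M N : nat) (d0 K k0 : R) (g h Ut Ct : nat -> R -> R).
Hypothesis Hg : forall i, (i < M)%nat -> forall x y, d0 <= x -> x < y -> y <= K -> g i y < g i x.
Hypothesis Hh : forall j, (j < N)%nat -> forall x y, 0 <= x -> x < y -> y <= k0 -> h j x < h j y.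
Hypothesis HUt : forall i, (i < M)%nat ->
  forall x, d0 <= x <= K -> derivable_pt_lim (Ut i) x (g i x).
Hypothesis HCt : forall j, (j < N)%nat ->
  forall x, 0 <= x <= k0 -> derivable_pt_lim (Ct j) x (h j x).

Definition welfare (d s : nat -> R) : R :=
  sumR M (fun i => Ut i (d i)) - sumR N (fun j => Ct j (s j)).

(* The KKT price is a Lagrange multiplier: each player's gap to its supporting line
   is nonnegative. *)
Lemma kkt_welfare_max p d s d' s' :
  market_kkt M N d0 K k0 g h p d s -> sumR M d' = sumR N s' ->
  (forall i, (i < M)%nat -> d0 <= d' i <= K) -> (forall j, (j < N)%nat -> 0 <= s' j <= k0) ->
  welfare d' s' <= welfare d s /\
  (welfare d' s' = welfare d s ->
     (forall i, (i < M)%nat -> d' i = d i) /\ (forall j, (j < N)%nat -> s' j = s j)).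
Proof.
  intros [Hp [HS [Hd Hs]]] HS' Hd' Hs'.
  set (gapU := fun i => Ut i (d i) + p * (d' i - d i) - Ut i (d' i)).
  set (gapC := fun j => Ct j (s' j) - Ct j (s j) - p * (s' j - s j)).
  assert (HgU : forall i, (i < M)%nat -> d' i <> d i -> 0 < gapU i).
  { intros i Hi Hne. destruct (Hd i Hi) as [Hdi [G1 G2]].
    pose proof (kkt_lower_support (Ut i) (g i) d0 K (d i) p (d' i)
                  (HUt i Hi) (Hg i Hi) Hdi G1 G2 (Hd' i Hi) Hne).
    unfold gapU; lra. }
  assert (HgC : forall j, (j < N)%nat -> s' j <> s j -> 0 < gapC j).
  { intros j Hj Hne. destruct (Hs j Hj) as [Hsj [G1 G2]].
    pose proof (kkt_upper_support (Ct j) (h j) 0 k0 (s j) p (s' j)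
                  (HCt j Hj) (Hh j Hj) Hsj G1 G2 (Hs' j Hj) Hne).
    unfold gapC; lra. }
  assert (HgU0 : forall i, (i < M)%nat -> 0 <= gapU i).
  { intros i Hi. destruct (Req_dec (d' i) (d i)) as [E|Hne];
      [unfold gapU; rewrite E; lra | left; auto]. }
  assert (HgC0 : forall j, (j < N)%nat -> 0 <= gapC j).
  { intros j Hj. destruct (Req_dec (s' j) (s j)) as [E|Hne];
      [unfold gapC; rewrite E; lra | left; auto]. }
  assert (E : welfare d s - welfare d' s' = sumR M gapU + sumR N gapC).
  { unfold welfare, gapU, gapC.
    rewrite !sumR_minus, !sumR_plus, !sumR_scal, !sumR_minus, HS, HS'. ring. }
  assert (0 <= sumR M gapU) by (apply sumR_nonneg; exact HgU0).
  assert (0 <= sumR N gapC) by (apply sumR_nonneg; exact HgC0).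
  split; [lra|]. intros Heq. split.
  - intros i Hi. destruct (Req_dec (d' i) (d i)) as [|Hne]; [assumption|exfalso].
    pose proof (sumR_ge_term M gapU i HgU0 Hi). pose proof (HgU i Hi Hne). lra.
  - intros j Hj. destruct (Req_dec (s' j) (s j)) as [|Hne]; [assumption|exfalso].
    pose proof (sumR_ge_term N gapC j HgC0 Hj). pose proof (HgC j Hj Hne). lra.
Qed.

End Welfare.

Lemma share_bounds D T x : 0 < D -> 0 < T -> 0 <= x -> 0 <= D * x / (T + x) < D.
Proof.
  intros HD HT Hx. split.
  - apply Rdiv_le_0_compat; nra.
  - apply Rmult_lt_reg_r with (T + x); [lra|]. field_simplify; nra.
Qed.

Lemma share_lt D T x y : 0 < D -> 0 < T -> 0 <= x -> x < y -> D * x / (T + x) < D * y / (T + y).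
Proof.
  intros HD HT Hx Hxy.
  replace (D * x / (T + x)) with (D - D * T * / (T + x)) by (field; lra).
  replace (D * y / (T + y)) with (D - D * T * / (T + y)) by (field; lra).
  apply Rplus_lt_compat_l, Ropp_lt_contravar, Rmult_lt_compat_l; [nra|].
  apply Rinv_lt_contravar; nra.
Qed.

Section Consumer.
Variables (U U' : R -> R) (d0 D K : R).
Hypothesis Hd0 : 0 < d0.
Hypothesis HD : 0 < D.
Hypothesis HK : K = D + d0.
Hypothesis HU : C1_halfline_deriv d0 U U'.
Hypothesis Hconc : concave_on (fun x => d0 <= x) U.
Hypothesis Hincr : strict_incr_on (fun x => d0 <= x) U.

Local Notation V := (lin_ext U U' d0).
Local Notation V' := (lin_ext' U' d0).

Lemma V_deriv x : derivable_pt_lim V x (V' x).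
Proof. exact (lin_ext_deriv U U' d0 HU x). Qed.

Lemma V_continuous x : continuous V x.
Proof.
  apply continuity_pt_filterlim, derivable_continuous_pt. exists (V' x). exact (V_deriv x).
Qed.

Lemma V_concave : concave_on (fun x => d0 <= x) V.
Proof.
  intros x y t Hx Hy Ht. cbv beta in Hx, Hy.
  assert (d0 <= t * x + (1 - t) * y) by nra.
  rewrite !lin_ext_eq by assumption. apply Hconc; assumption.
Qed.

Lemma V'_pos x : d0 <= x -> 0 < V' x.
Proof.
  intros Hx.
  pose proof (concave_slope_le_deriv V d0 V_concave x (x + 1) (V' x) (V_deriv x) Hx ltac:(lra))
    as Hs.
  rewrite !lin_ext_eq in Hs by lra.
  assert (U x < U (x + 1)) by (apply Hincr; cbv beta; lra).
  replace (x + 1 - x) with 1 in Hs by ring. lra.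
Qed.

Lemma V'_nonincr x y : d0 <= x -> x <= y -> V' y <= V' x.
Proof.
  intros Hx Hxy. destruct (Rle_lt_or_eq_dec x y Hxy) as [Hlt| ->]; [|lra].
  pose proof (concave_slope_le_deriv V d0 V_concave x y (V' x) (V_deriv x) Hx Hlt).
  pose proof (concave_deriv_le_slope V d0 V_concave x y (V' y) (V_deriv y) Hx Hlt).
  lra.
Qed.

Definition dUtl (x : R) : R := (1 - x / K) * V' x.

Lemma dUtl_continuity : continuity dUtl.
Proof.
  intros x. unfold dUtl. apply continuity_pt_mult; [reg | apply (lin_ext'_continuity U U' d0 HU)].
Qed.

Lemma dUtl_decr x y : d0 <= x -> x < y -> y <= K -> dUtl y < dUtl x.
Proof.
  intros Hx Hxy Hy. unfold dUtl.
  pose proof (V'_pos x Hx). pose proof (V'_nonincr x y Hx ltac:(lra)).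
  assert (y / K <= 1) by (apply (Rdiv_le_1 y K); lra).
  assert (x / K < y / K) by (apply Rmult_lt_compat_r; [apply Rinv_0_lt_compat|]; lra).
  apply Rle_lt_trans with ((1 - y / K) * V' x);
    [apply Rmult_le_compat_l | apply Rmult_lt_compat_r]; lra.
Qed.

Lemma dUtl_K : dUtl K = 0.
Proof. unfold dUtl. replace (1 - K / K) with 0 by (field; lra). ring. Qed.

Definition Utl (x : R) : R := (1 - x / K) * V x + / K * RInt V d0 x.

Lemma Utl_deriv x : derivable_pt_lim Utl x (dUtl x).
Proof.
  apply is_derive_Reals. unfold Utl, dUtl.
  auto_derive.
  - repeat split.
    + exists (V' x). apply is_derive_Reals, V_deriv.
    + apply (ex_RInt_continuous (V := R_CompleteNormedModule)). intros; apply V_continuous.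
    + exists (mkposreal 1 Rlt_0_1). intros y _. apply continuity_pt_filterlim, V_continuous.
  - replace (Derive (fun y => V y) x) with (V' x)
      by (symmetry; apply is_derive_unique, is_derive_Reals, V_deriv).
    field. lra.
Qed.

Lemma Utl_eq x : d0 <= x -> (1 - x / K) * U x + / K * RInt U d0 x = Utl x.
Proof.
  intros Hx. unfold Utl. rewrite lin_ext_eq by exact Hx. f_equal. f_equal.
  apply RInt_ext. intros y Hy. rewrite Rmin_left, Rmax_right in Hy by exact Hx.
  symmetry. apply lin_ext_eq. lra.
Qed.

Definition cons_alloc (T x : R) : R := d0 + D * x / (T + x).
Definition cons_payoff (T x : R) : R := V (cons_alloc T x) - (T + x) / D * d0 - x.
Definition cons_foc (T x : R) : R := dUtl (cons_alloc T x) - (T + x) / D.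

Lemma cons_alloc_bounds T x : 0 < T -> 0 <= x -> d0 <= cons_alloc T x < K.
Proof. intros HT Hx. unfold cons_alloc. pose proof (share_bounds D T x HD HT Hx). lra. Qed.

Lemma cons_alloc_pos_iff T t : 0 < T -> 0 <= t -> (0 < t <-> d0 < cons_alloc T t).
Proof.
  intros HT Ht. unfold cons_alloc. split; intros H.
  - pose proof (share_lt D T 0 t HD HT (Rle_refl 0) H).
    replace (D * 0 / (T + 0)) with 0 in H0 by (field; lra). lra.
  - destruct (Rle_lt_or_eq_dec 0 t Ht) as [|<-]; [assumption|].
    replace (D * 0 / (T + 0)) with 0 in H by (field; lra). lra.
Qed.

Lemma cons_foc_decr T x y : 0 < T -> 0 <= x -> x < y -> cons_foc T y < cons_foc T x.
Proof.
  intros HT Hx Hxy. unfold cons_foc.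
  destruct (cons_alloc_bounds T x HT Hx). destruct (cons_alloc_bounds T y HT ltac:(lra)).
  assert (cons_alloc T x < cons_alloc T y)
    by (unfold cons_alloc; pose proof (share_lt D T x y HD HT Hx Hxy); lra).
  assert (dUtl (cons_alloc T y) < dUtl (cons_alloc T x)) by (apply dUtl_decr; lra).
  assert ((T + x) / D < (T + y) / D)
    by (apply Rmult_lt_compat_r; [apply Rinv_0_lt_compat|]; lra).
  lra.
Qed.

(* The factor [K / (T + x)] comes from [1 - d / K = D T / (K (T + x))] at [d = cons_alloc T x]. *)
Lemma cons_payoff_deriv T x : 0 < T -> 0 <= x ->
  derivable_pt_lim (cons_payoff T) x (K / (T + x) * cons_foc T x).
Proof.
  intros HT Hx. apply is_derive_Reals. unfold cons_payoff, cons_foc, dUtl, cons_alloc.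
  auto_derive.
  - repeat split; try lra. exists (V' (d0 + D * x / (T + x))). apply is_derive_Reals, V_deriv.
  - replace (Derive (fun y => V y) (d0 + D * x * / (T + x))) with (V' (d0 + D * x / (T + x)))
      by (symmetry; apply is_derive_unique, is_derive_Reals, V_deriv).
    rewrite HK. field. lra.
Qed.

Lemma cons_best_response_iff T t : 0 < T -> 0 <= t ->
  (forall x, 0 <= x -> cons_payoff T x <= cons_payoff T t) <->
  dUtl (cons_alloc T t) <= (T + t) / D /\
  (d0 < cons_alloc T t -> dUtl (cons_alloc T t) = (T + t) / D).
Proof.
  intros HT Ht.
  rewrite (halfline_argmax_iff (cons_payoff T) (fun x => K / (T + x) * cons_foc T x) (cons_foc T)).
  - rewrite <- (cons_alloc_pos_iff T t HT Ht). unfold cons_foc.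
    split; intros [H1 H2]; (split; [lra | intros Hpos; specialize (H2 Hpos); lra]).
  - intros x Hx. apply cons_payoff_deriv; assumption.
  - intros x Hx. exists (K / (T + x)). split; [apply Rdiv_lt_0_compat; lra | reflexivity].
  - intros x y Hx Hxy. apply cons_foc_decr; assumption.
  - exact Ht.
Qed.

Lemma cons_payoff_eq T x : 0 < T -> 0 <= x ->
  cons_payoff T x = U (cons_alloc T x) - (T + x) / D * d0 - x.
Proof.
  intros HT Hx. unfold cons_payoff. rewrite lin_ext_eq; [reflexivity|].
  apply cons_alloc_bounds; assumption.
Qed.

End Consumer.

Section Supplier.
Variables (C : R -> R) (k0 D L : R).
Hypothesis Hk0 : 0 < k0.
Hypothesis HL : 0 < L.
Hypothesis HD : D = L + k0.
Hypothesis HC : C1_on_R C.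
Hypothesis Hconv : convex_on (fun _ => True) C.
Hypothesis Hincr : strict_incr_on (fun x => 0 <= x) C.
Hypothesis HC0 : forall s, s <= 0 -> C s = 0.

Local Notation C' := (Derive C).

Lemma C_deriv x : derivable_pt_lim C x (C' x).
Proof. apply is_derive_Reals, Derive_correct, (proj1 HC). Qed.

Lemma C_continuous x : continuous C x.
Proof.
  apply continuity_pt_filterlim, derivable_continuous_pt. exists (C' x). exact (C_deriv x).
Qed.

Lemma C'_nonpos s : s <= 0 -> C' s = 0.
Proof.
  intros Hs. destruct (Req_dec (C' s) 0) as [|Hne]; [assumption|exfalso].
  destruct (C_deriv s (Rabs (C' s)) (Rabs_pos_lt _ Hne)) as [d Hd]. pose proof (cond_pos d).
  specialize (Hd (- (d / 2)) ltac:(lra) ltac:(rewrite Rabs_Ropp, Rabs_pos_eq; lra)).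
  rewrite !HC0 in Hd by lra.
  replace ((0 - 0) / - (d / 2) - C' s) with (- C' s) in Hd by (field; lra).
  rewrite Rabs_Ropp in Hd. lra.
Qed.

Lemma C'_nondecr x y : x <= y -> C' x <= C' y.
Proof.
  intros Hxy. destruct (Rle_lt_or_eq_dec x y Hxy) as [Hlt| ->]; [|lra].
  pose proof (convex_opp_concave C x Hconv) as Hc.
  pose proof (concave_slope_le_deriv _ x Hc x y (- C' x)
                (derivable_pt_lim_opp _ _ _ (C_deriv x)) (Rle_refl x) Hlt).
  pose proof (concave_deriv_le_slope _ x Hc x y (- C' y)
                (derivable_pt_lim_opp _ _ _ (C_deriv y)) (Rle_refl x) Hlt).
  lra.
Qed.

Lemma C'_pos s : 0 < s -> 0 < C' s.
Proof.
  intros Hs.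
  pose proof (concave_deriv_le_slope _ 0 (convex_opp_concave C 0 Hconv) 0 s (- C' s)
                (derivable_pt_lim_opp _ _ _ (C_deriv s)) (Rle_refl 0) Hs) as Hsl.
  assert (C 0 < C s) by (apply Hincr; cbv beta; lra).
  assert (0 < (C s - C 0) / (s - 0)) by (apply Rdiv_lt_0_compat; lra).
  replace ((- C s - - C 0) / (s - 0)) with (- ((C s - C 0) / (s - 0))) in Hsl by (field; lra).
  lra.
Qed.

Definition dCtl (s : R) : R := (1 + s / L) * C' s.

Lemma dCtl_continuity : continuity dCtl.
Proof.
  intros x. unfold dCtl. apply continuity_pt_mult; [reg|].
  apply continuity_pt_filterlim, (proj2 HC).
Qed.

Lemma dCtl_nonpos s : s <= 0 -> dCtl s = 0.
Proof. intros Hs. unfold dCtl. rewrite C'_nonpos by exact Hs. ring. Qed.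

Lemma dCtl_nondecr x y : - L < x -> x <= y -> dCtl x <= dCtl y.
Proof.
  intros Hx Hxy. unfold dCtl.
  assert (- 1 < x / L) by (apply Rmult_lt_reg_r with L; [lra|]; field_simplify; lra).
  assert (x / L <= y / L) by (apply Rmult_le_compat_r; [left; apply Rinv_0_lt_compat|]; lra).
  pose proof (C'_nondecr x y Hxy).
  assert (0 <= C' x) by (rewrite <- (C'_nonpos (Rmin x 0)) by apply Rmin_r;
                         apply C'_nondecr, Rmin_l).
  apply Rle_trans with ((1 + y / L) * C' x);
    [apply Rmult_le_compat_r | apply Rmult_le_compat_l]; lra.
Qed.

Lemma dCtl_incr x y : 0 <= x -> x < y -> dCtl x < dCtl y.
Proof.
  intros Hx Hxy. unfold dCtl.
  assert (0 <= x / L) by (apply Rdiv_le_0_compat; lra).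
  assert (x / L < y / L) by (apply Rmult_lt_compat_r; [apply Rinv_0_lt_compat|]; lra).
  pose proof (C'_nondecr x y ltac:(lra)). pose proof (C'_pos y ltac:(lra)).
  apply Rle_lt_trans with ((1 + x / L) * C' y);
    [apply Rmult_le_compat_l | apply Rmult_lt_compat_r]; lra.
Qed.

Definition Ctl (s : R) : R := (1 + s / L) * C s - / L * RInt C 0 s.

Lemma Ctl_deriv x : derivable_pt_lim Ctl x (dCtl x).
Proof.
  apply is_derive_Reals. unfold Ctl, dCtl.
  auto_derive.
  - repeat split.
    + apply (proj1 HC).
    + apply (ex_RInt_continuous (V := R_CompleteNormedModule)). intros; apply C_continuous.
    + exists (mkposreal 1 Rlt_0_1). intros y _. apply continuity_pt_filterlim, C_continuous.
  - replace (fun y => C y) with C by reflexivity. field. lra.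
Qed.

Definition sup_alloc (T x : R) : R := k0 - D * x / (T + x).
Definition sup_payoff (T x : R) : R := (T + x) / D * k0 - x - C (sup_alloc T x).
Definition sup_foc (T x : R) : R := dCtl (sup_alloc T x) - (T + x) / D.

Lemma sup_alloc_bounds T x : 0 < T -> 0 <= x -> - L < sup_alloc T x <= k0.
Proof. intros HT Hx. unfold sup_alloc. pose proof (share_bounds D T x ltac:(lra) HT Hx). lra. Qed.

Lemma sup_alloc_pos_iff T t : 0 < T -> 0 <= t -> (0 < t <-> sup_alloc T t < k0).
Proof.
  intros HT Ht. unfold sup_alloc. split; intros H.
  - pose proof (share_lt D T 0 t ltac:(lra) HT (Rle_refl 0) H).
    replace (D * 0 / (T + 0)) with 0 in H0 by (field; lra). lra.
  - destruct (Rle_lt_or_eq_dec 0 t Ht) as [|<-]; [assumption|].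
    replace (D * 0 / (T + 0)) with 0 in H by (field; lra). lra.
Qed.

Lemma sup_foc_decr T x y : 0 < T -> 0 <= x -> x < y -> sup_foc T y < sup_foc T x.
Proof.
  intros HT Hx Hxy. unfold sup_foc.
  destruct (sup_alloc_bounds T y HT ltac:(lra)).
  assert (sup_alloc T y <= sup_alloc T x)
    by (unfold sup_alloc; pose proof (share_lt D T x y ltac:(lra) HT Hx Hxy); lra).
  assert (dCtl (sup_alloc T y) <= dCtl (sup_alloc T x)) by (apply dCtl_nondecr; lra).
  assert ((T + x) / D < (T + y) / D)
    by (apply Rmult_lt_compat_r; [apply Rinv_0_lt_compat|]; lra).
  lra.
Qed.

(* The factor [L / (T + x)] comes from [1 + s / L = D T / (L (T + x))] at [s = sup_alloc T x]. *)
Lemma sup_payoff_deriv T x : 0 < T -> 0 <= x ->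
  derivable_pt_lim (sup_payoff T) x (L / (T + x) * sup_foc T x).
Proof.
  intros HT Hx. apply is_derive_Reals. unfold sup_payoff, sup_foc, dCtl, sup_alloc.
  auto_derive.
  - repeat split; try lra. apply (proj1 HC).
  - replace (fun y => C y) with C by reflexivity.
    change (k0 + - (D * x * / (T + x))) with (k0 - D * x / (T + x)).
    rewrite HD. field. lra.
Qed.

Lemma sup_best_response_iff T t : 0 < T -> 0 <= t ->
  (forall x, 0 <= x -> sup_payoff T x <= sup_payoff T t) <->
  dCtl (sup_alloc T t) <= (T + t) / D /\
  (sup_alloc T t < k0 -> dCtl (sup_alloc T t) = (T + t) / D).
Proof.
  intros HT Ht.
  rewrite (halfline_argmax_iff (sup_payoff T) (fun x => L / (T + x) * sup_foc T x) (sup_foc T)).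
  - rewrite <- (sup_alloc_pos_iff T t HT Ht). unfold sup_foc.
    split; intros [H1 H2]; (split; [lra | intros Hpos; specialize (H2 Hpos); lra]).
  - intros x Hx. apply sup_payoff_deriv; assumption.
  - intros x Hx. exists (L / (T + x)). split; [apply Rdiv_lt_0_compat; lra | reflexivity].
  - intros x y Hx Hxy. apply sup_foc_decr; assumption.
  - exact Ht.
Qed.

End Supplier.

Section Market.
Variables (M N : nat) (d0 k0 : R) (U U' C : nat -> R -> R).
Hypothesis HM : (1 <= M)%nat.
Hypothesis Hd0 : 0 < d0.
Hypothesis Hk0 : 0 < k0.
Hypothesis Hnopiv : (INR N - 1) * k0 / (INR M * d0) > 1.
Hypothesis HU' : forall i, (i < M)%nat -> C1_halfline_deriv d0 (U i) (U' i).
Hypothesis HU_conc : forall i, (i < M)%nat -> concave_on (fun x => d0 <= x) (U i).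
Hypothesis HU_incr : forall i, (i < M)%nat -> strict_incr_on (fun x => d0 <= x) (U i).
Hypothesis HU_0 : forall i, (i < M)%nat -> U i d0 = 0.
Hypothesis HC_conv : forall j, (j < N)%nat -> convex_on (fun _ => True) (C j).
Hypothesis HC_incr : forall j, (j < N)%nat -> strict_incr_on (fun x => 0 <= x) (C j).
Hypothesis HC_C1 : forall j, (j < N)%nat -> C1_on_R (C j).
Hypothesis HC_0 : forall j, (j < N)%nat -> forall s, s <= 0 -> C j s = 0.

Local Notation D := (INR N * k0 - INR M * d0).
Local Notation K := (INR N * k0 - (INR M - 1) * d0).
Local Notation L := ((INR N - 1) * k0 - INR M * d0).
Local Notation total := (total M N).
Local Notation price := (price M N d0 k0).
Local Notation dalloc := (dalloc M N d0 k0).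
Local Notation salloc := (salloc M N d0 k0).
Local Notation pay_d := (pay_d M N d0 k0 U).
Local Notation pay_s := (pay_s M N d0 k0 C).

Lemma L_pos : 0 < L.
Proof.
  assert (1 <= INR M) by (apply (le_INR 1), HM). assert (HMd : 0 < INR M * d0) by nra.
  assert (E : (INR N - 1) * k0 = (INR N - 1) * k0 / (INR M * d0) * (INR M * d0)) by (field; lra).
  rewrite E. nra.
Qed.

Lemma D_pos : 0 < D.
Proof. pose proof L_pos. lra. Qed.

Lemma K_eq : K = D + d0.
Proof. ring. Qed.

Lemma D_eq : D = L + k0.
Proof. ring. Qed.

(* The derivatives of the paper's U~_i and C~_j. *)
Definition margU (i : nat) : R -> R := dUtl (U' i) d0 K.
Definition margC (j : nat) : R -> R := dCtl (C j) L.
Definition kkt : R -> (nat -> R) -> (nat -> R) -> Prop := market_kkt M N d0 K k0 margU margC.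

Lemma margU_decr i : (i < M)%nat ->
  forall x y, d0 <= x -> x < y -> y <= K -> margU i y < margU i x.
Proof.
  intros Hi.
  exact (dUtl_decr (U i) (U' i) d0 D K Hd0 D_pos K_eq (HU' i Hi) (HU_conc i Hi) (HU_incr i Hi)).
Qed.

Lemma margC_incr j : (j < N)%nat ->
  forall x y, 0 <= x -> x < y -> y <= k0 -> margC j x < margC j y.
Proof.
  intros Hj x y Hx Hxy _.
  exact (dCtl_incr (C j) L L_pos (HC_C1 j Hj) (HC_conv j Hj) (HC_incr j Hj) x y Hx Hxy).
Qed.

Lemma supply_exceeds_base_demand : INR M * d0 < INR N * k0.
Proof. pose proof L_pos. lra. Qed.

Lemma market_kkt_exists : exists p d s, kkt p d s.
Proof.
  apply (kkt_exists M N d0 K k0 margU margC margU_decr margC_incr supply_exceeds_base_demand).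
  - intros i Hi. exact (dUtl_continuity (U i) (U' i) d0 K (HU' i Hi)).
  - intros j Hj. exact (dCtl_continuity (C j) L (HC_C1 j Hj)).
  - intros i Hi. exact (dUtl_K (U' i) d0 D K Hd0 D_pos K_eq).
  - intros j Hj. apply (dCtl_nonpos (C j) L (HC_C1 j Hj) (HC_0 j Hj)). lra.
  - lia.
  - pose proof D_pos. lra.
  - exact Hk0.
Qed.

Lemma market_kkt_unique p d s p' d' s' : kkt p d s -> kkt p' d' s' ->
  p = p' /\ (forall i, (i < M)%nat -> d i = d' i) /\ (forall j, (j < N)%nat -> s j = s' j).
Proof.
  exact (kkt_unique M N d0 K k0 margU margC margU_decr margC_incr supply_exceeds_base_demand
           p d s p' d' s').
Qed.

Lemma kkt_d_lt_K p d s i : kkt p d s -> (i < M)%nat -> d i < K.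
Proof.
  intros [Hp [_ [Hd _]]] Hi. destruct (Hd i Hi) as [[B1 B2] [_ G]].
  apply Rnot_le_lt. intros HK. assert (E : d i = K) by lra.
  pose proof D_pos. specialize (G ltac:(lra)). rewrite E in G.
  unfold margU in G. rewrite (dUtl_K (U' i) d0 D K Hd0 D_pos K_eq) in G. lra.
Qed.

Lemma price_pos a b : 0 < total a b -> 0 < price a b.
Proof. intros H. apply Rdiv_lt_0_compat; [exact H | exact D_pos]. Qed.

Lemma dalloc_eq a b i : 0 < total a b -> dalloc a b i = d0 + a i / price a b.
Proof. intros H. unfold Defs.dalloc. destruct (Req_EM_T (total a b) 0); [lra | reflexivity]. Qed.

Lemma salloc_eq a b j : 0 < total a b -> salloc a b j = k0 - b j / price a b.
Proof. intros H. unfold Defs.salloc. destruct (Req_EM_T (total a b) 0); [lra | reflexivity]. Qed.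

Lemma total_upd_d a b i x : (i < M)%nat -> total (upd a i x) b = total a b - a i + x.
Proof. intros Hi. unfold Defs.total. rewrite sumR_upd by exact Hi. ring. Qed.

Lemma total_upd_s a b j x : (j < N)%nat -> total a (upd b j x) = total a b - b j + x.
Proof. intros Hj. unfold Defs.total. rewrite sumR_upd by exact Hj. ring. Qed.

Lemma bid_d_le_total a b i : (forall i, (i < M)%nat -> 0 <= a i) ->
  (forall j, (j < N)%nat -> 0 <= b j) -> (i < M)%nat -> a i <= total a b.
Proof.
  intros Ha Hb Hi. unfold Defs.total.
  pose proof (sumR_ge_term M a i Ha Hi). pose proof (sumR_nonneg N b Hb). lra.
Qed.

Lemma bid_s_le_total a b j : (forall i, (i < M)%nat -> 0 <= a i) ->
  (forall j, (j < N)%nat -> 0 <= b j) -> (j < N)%nat -> b j <= total a b.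
Proof.
  intros Ha Hb Hj. unfold Defs.total.
  pose proof (sumR_ge_term N b j Hb Hj). pose proof (sumR_nonneg M a Ha). lra.
Qed.

Lemma alloc_clearing a b : 0 < total a b -> sumR M (dalloc a b) = sumR N (salloc a b).
Proof.
  intros Htot.
  rewrite (sumR_ext M _ (fun i => d0 + / price a b * a i))
    by (intros; rewrite dalloc_eq by exact Htot; unfold Rdiv; ring).
  rewrite (sumR_ext N _ (fun j => k0 + - / price a b * b j))
    by (intros; rewrite salloc_eq by exact Htot; unfold Rdiv; ring).
  rewrite !sumR_plus, !sumR_const, !sumR_scal.
  unfold Defs.price, Defs.total in *. pose proof D_pos. field. lra.
Qed.

Lemma dalloc_cons_alloc a b i : 0 < total a b - a i -> 0 <= a i ->
  dalloc a b i = cons_alloc d0 D (total a b - a i) (a i).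
Proof.
  intros HT Ha. pose proof D_pos. unfold cons_alloc.
  rewrite dalloc_eq by lra. unfold Defs.price.
  replace (total a b - a i + a i) with (total a b) by ring. field. lra.
Qed.

Lemma salloc_sup_alloc a b j : 0 < total a b - b j -> 0 <= b j ->
  salloc a b j = sup_alloc k0 D (total a b - b j) (b j).
Proof.
  intros HS Hb. pose proof D_pos. unfold sup_alloc.
  rewrite salloc_eq by lra. unfold Defs.price.
  replace (total a b - b j + b j) with (total a b) by ring. field. lra.
Qed.

Lemma pay_d_cons_payoff i a b : (i < M)%nat -> 0 < total a b - a i -> 0 <= a i ->
  pay_d i a b = cons_payoff (U i) (U' i) d0 D (total a b - a i) (a i).
Proof.
  intros Hi HT Ha. rewrite (cons_payoff_eq (U i) (U' i) d0 D K D_pos K_eq) by assumption.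
  unfold Defs.pay_d. rewrite (dalloc_cons_alloc a b i HT Ha). unfold Defs.price.
  replace (total a b - a i + a i) with (total a b) by ring. reflexivity.
Qed.

Lemma pay_s_sup_payoff j a b : (j < N)%nat -> 0 < total a b - b j -> 0 <= b j ->
  pay_s j a b = sup_payoff (C j) k0 D (total a b - b j) (b j).
Proof.
  intros Hj HS Hb. unfold Defs.pay_s, sup_payoff.
  rewrite (salloc_sup_alloc a b j HS Hb). unfold Defs.price.
  replace (total a b - b j + b j) with (total a b) by ring. reflexivity.
Qed.

Lemma consumer_best_response a b i : (i < M)%nat -> 0 <= a i -> 0 < total a b - a i ->
  (forall x, 0 <= x -> pay_d i (upd a i x) b <= pay_d i a b) <->
  margU i (dalloc a b i) <= price a b /\
  (d0 < dalloc a b i -> margU i (dalloc a b i) = price a b).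
Proof.
  intros Hi Ha HT.
  assert (Hdev : forall x, 0 <= x -> pay_d i (upd a i x) b
                   = cons_payoff (U i) (U' i) d0 D (total a b - a i) x).
  { intros x Hx.
    assert (E : total (upd a i x) b - upd a i x i = total a b - a i)
      by (rewrite total_upd_d, upd_same by exact Hi; ring).
    rewrite (pay_d_cons_payoff i (upd a i x) b Hi) by (rewrite ?E, ?upd_same; lra).
    rewrite E, upd_same. reflexivity. }
  rewrite (dalloc_cons_alloc a b i HT Ha), (pay_d_cons_payoff i a b Hi HT Ha).
  replace (price a b) with ((total a b - a i + a i) / D) by (unfold Defs.price; f_equal; ring).
  rewrite <- (cons_best_response_iff (U i) (U' i) d0 D K Hd0 D_pos K_eq
                (HU' i Hi) (HU_conc i Hi) (HU_incr i Hi) _ _ HT Ha).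
  split; intros H x Hx; specialize (H x Hx); rewrite Hdev in *; assumption.
Qed.

Lemma supplier_best_response a b j : (j < N)%nat -> 0 <= b j -> 0 < total a b - b j ->
  (forall x, 0 <= x -> pay_s j a (upd b j x) <= pay_s j a b) <->
  margC j (salloc a b j) <= price a b /\
  (salloc a b j < k0 -> margC j (salloc a b j) = price a b).
Proof.
  intros Hj Hb HS.
  assert (Hdev : forall x, 0 <= x -> pay_s j a (upd b j x)
                   = sup_payoff (C j) k0 D (total a b - b j) x).
  { intros x Hx.
    assert (E : total a (upd b j x) - upd b j x j = total a b - b j)
      by (rewrite total_upd_s, upd_same by exact Hj; ring).
    rewrite (pay_s_sup_payoff j a (upd b j x) Hj) by (rewrite ?E, ?upd_same; lra).
    rewrite E, upd_same. reflexivity. }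
  rewrite (salloc_sup_alloc a b j HS Hb), (pay_s_sup_payoff j a b Hj HS Hb).
  replace (price a b) with ((total a b - b j + b j) / D) by (unfold Defs.price; f_equal; ring).
  rewrite <- (sup_best_response_iff (C j) k0 D L Hk0 L_pos D_eq
                (HC_C1 j Hj) (HC_conv j Hj) (HC_0 j Hj) _ _ HS Hb).
  split; intros H x Hx; specialize (H x Hx); rewrite Hdev in *; assumption.
Qed.

Lemma pay_d_zero_total i a b : total a b = 0 -> pay_d i a b = U i d0 - a i.
Proof.
  intros Hz. unfold Defs.pay_d, Defs.dalloc, Defs.price. rewrite Hz.
  destruct (Req_EM_T 0 0) as [_|]; [unfold Rdiv; ring | lra].
Qed.

Lemma pay_d_sole i a b : total a b = a i -> 0 < a i ->
  pay_d i a b = U i (d0 + D) - a i / D * d0 - a i.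
Proof.
  intros Htot Hai. pose proof D_pos. unfold Defs.pay_d. rewrite dalloc_eq by lra.
  unfold Defs.price. rewrite Htot. replace (a i / (a i / D)) with D by (field; lra). reflexivity.
Qed.

(* A lone supplier is allocated [k0 - D = - L < 0], where its cost vanishes. *)
Lemma pay_s_sole j a b : (j < N)%nat -> total a b = b j -> 0 < b j ->
  pay_s j a b = b j / D * k0 - b j.
Proof.
  intros Hj Htot Hbj. pose proof L_pos. unfold Defs.pay_s. rewrite salloc_eq by lra.
  unfold Defs.price. rewrite Htot. replace (b j / (b j / D)) with D by (field; lra).
  rewrite (HC_0 j Hj) by lra. ring.
Qed.

(* Otherwise the first consumer gains by a small bid, which buys it the whole surplus [D]. *)
Lemma NE_total_pos a b : is_NE M N d0 k0 U C a b -> 0 < total a b.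
Proof.
  intros [Ha [Hb [Hpa _]]]. assert (H0M : (0 < M)%nat) by lia.
  pose proof (bid_d_le_total a b 0 Ha Hb H0M) as Ha0.
  assert (0 <= total a b)
    by (unfold Defs.total; pose proof (sumR_nonneg M a Ha); pose proof (sumR_nonneg N b Hb); lra).
  apply Rnot_le_lt. intros Hle. assert (Hz : total a b = 0) by lra.
  pose proof (Ha 0%nat H0M). pose proof D_pos.
  assert (HU0 : 0 < U 0%nat (d0 + D)).
  { rewrite <- (HU_0 0%nat H0M). apply (HU_incr 0%nat H0M); cbv beta; lra. }
  set (x := U 0%nat (d0 + D) / (2 * (d0 / D + 1))).
  assert (Hdd : 0 < d0 / D + 1) by (pose proof (Rdiv_lt_0_compat d0 D Hd0 D_pos); lra).
  assert (Hx : 0 < x) by (apply Rdiv_lt_0_compat; lra).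
  specialize (Hpa 0%nat H0M x (Rlt_le _ _ Hx)).
  rewrite (pay_d_sole 0%nat (upd a 0%nat x) b) in Hpa
    by (rewrite ?total_upd_d, ?upd_same by exact H0M; lra).
  rewrite (pay_d_zero_total 0%nat a b Hz), (HU_0 0%nat H0M), upd_same in Hpa.
  assert (x / D * d0 + x = U 0%nat (d0 + D) / 2) by (unfold x; field; lra).
  lra.
Qed.

(* A consumer bidding alone halves its bid: same allocation, lower price. *)
Lemma NE_others_pos_d a b i : is_NE M N d0 k0 U C a b -> (i < M)%nat -> 0 < total a b - a i.
Proof.
  intros HNE Hi. pose proof (NE_total_pos a b HNE) as Htot.
  destruct HNE as [Ha [Hb [Hpa _]]]. pose proof (bid_d_le_total a b i Ha Hb Hi).
  apply Rnot_le_lt. intros Hle. assert (Hai : total a b = a i) by lra.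
  specialize (Hpa i Hi (a i / 2) ltac:(lra)).
  rewrite (pay_d_sole i (upd a i (a i / 2)) b) in Hpa
    by (rewrite ?total_upd_d, ?upd_same by exact Hi; lra).
  rewrite (pay_d_sole i a b Hai) in Hpa by lra. rewrite upd_same in Hpa.
  pose proof D_pos.
  assert (0 < a i / D * d0) by (apply Rmult_lt_0_compat; [apply Rdiv_lt_0_compat|]; lra).
  replace (a i / 2 / D * d0) with (a i / D * d0 / 2) in Hpa by (field; lra).
  lra.
Qed.

(* A supplier bidding alone sells at a loss; halving its bid halves the loss. *)
Lemma NE_others_pos_s a b j : is_NE M N d0 k0 U C a b -> (j < N)%nat -> 0 < total a b - b j.
Proof.
  intros HNE Hj. pose proof (NE_total_pos a b HNE) as Htot.
  destruct HNE as [Ha [Hb [_ Hps]]]. pose proof (bid_s_le_total a b j Ha Hb Hj).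
  apply Rnot_le_lt. intros Hle. assert (Hbj : total a b = b j) by lra.
  specialize (Hps j Hj (b j / 2) ltac:(lra)).
  rewrite (pay_s_sole j a (upd b j (b j / 2)) Hj) in Hps
    by (rewrite ?total_upd_s, ?upd_same by exact Hj; lra).
  rewrite (pay_s_sole j a b Hj Hbj) in Hps by lra. rewrite upd_same in Hps.
  pose proof L_pos.
  assert (b j / D * k0 < b j).
  { apply Rmult_lt_reg_r with D; [apply D_pos|]. field_simplify; [|pose proof D_pos; lra].
    nra. }
  replace (b j / 2 / D * k0) with (b j / D * k0 / 2) in Hps by (pose proof D_pos; field; lra).
  lra.
Qed.

Lemma NE_kkt a b : is_NE M N d0 k0 U C a b -> kkt (price a b) (dalloc a b) (salloc a b).
Proof.
  intros HNE. pose proof (NE_total_pos a b HNE) as Htot.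
  pose proof HNE as [Ha [Hb [Hpa Hps]]].
  split; [apply price_pos, Htot | split; [apply alloc_clearing, Htot | split]].
  - intros i Hi. pose proof (NE_others_pos_d a b i HNE Hi) as HT.
    pose proof (cons_alloc_bounds d0 D K D_pos K_eq _ _ HT (Ha i Hi)) as B.
    rewrite <- (dalloc_cons_alloc a b i HT (Ha i Hi)) in B.
    split; [lra|]. exact (proj1 (consumer_best_response a b i Hi (Ha i Hi) HT) (Hpa i Hi)).
  - intros j Hj. pose proof (NE_others_pos_s a b j HNE Hj) as HS.
    pose proof (sup_alloc_bounds k0 D L Hk0 L_pos D_eq _ _ HS (Hb j Hj)) as B.
    rewrite <- (salloc_sup_alloc a b j HS (Hb j Hj)) in B.
    destruct (proj1 (supplier_best_response a b j Hj (Hb j Hj) HS) (Hps j Hj)) as [G1 G2].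
    split; [|split; assumption]. split; [|lra].
    destruct (Rle_lt_or_eq_dec _ _ (proj2 B)) as [Hlt|Heq]; [|lra].
    apply Rnot_lt_le. intros Hneg. specialize (G2 Hlt).
    unfold margC in G2. rewrite (dCtl_nonpos (C j) L (HC_C1 j Hj) (HC_0 j Hj)) in G2 by lra.
    pose proof (price_pos a b Htot). lra.
Qed.

Definition bid_d (p : R) (d : nat -> R) (i : nat) : R := p * (d i - d0).
Definition bid_s (p : R) (s : nat -> R) (j : nat) : R := p * (k0 - s j).

Lemma total_bids p d s : kkt p d s -> total (bid_d p d) (bid_s p s) = p * D.
Proof.
  intros [_ [HS _]]. unfold Defs.total, bid_d, bid_s.
  rewrite !sumR_scal, !sumR_minus, !sumR_const, HS. ring.
Qed.

Lemma price_bids p d s : kkt p d s -> price (bid_d p d) (bid_s p s) = p.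
Proof.
  intros Hk. unfold Defs.price. rewrite (total_bids p d s Hk). pose proof D_pos. field. lra.
Qed.

Lemma total_bids_pos p d s : kkt p d s -> 0 < total (bid_d p d) (bid_s p s).
Proof.
  intros Hk. rewrite (total_bids p d s Hk). destruct Hk as [Hp _].
  apply Rmult_lt_0_compat; [exact Hp | exact D_pos].
Qed.

Lemma dalloc_bids p d s : kkt p d s -> dalloc (bid_d p d) (bid_s p s) = d.
Proof.
  intros Hk. apply functional_extensionality. intros i.
  rewrite dalloc_eq by exact (total_bids_pos p d s Hk). rewrite (price_bids p d s Hk).
  destruct Hk as [Hp _]. unfold bid_d. field. lra.
Qed.

Lemma salloc_bids p d s : kkt p d s -> salloc (bid_d p d) (bid_s p s) = s.
Proof.
  intros Hk. apply functional_extensionality. intros j.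
  rewrite salloc_eq by exact (total_bids_pos p d s Hk). rewrite (price_bids p d s Hk).
  destruct Hk as [Hp _]. unfold bid_s. field. lra.
Qed.

Lemma kkt_NE p d s : kkt p d s -> is_NE M N d0 k0 U C (bid_d p d) (bid_s p s).
Proof.
  intros Hk. pose proof Hk as [Hp [_ [Hd Hs]]].
  pose proof (total_bids p d s Hk) as Htot.
  pose proof D_pos. pose proof L_pos.
  split; [|split; [|split]].
  - intros i Hi. destruct (Hd i Hi) as [[B1 _] _]. apply Rmult_le_pos; lra.
  - intros j Hj. destruct (Hs j Hj) as [[_ B2] _]. apply Rmult_le_pos; lra.
  - intros i Hi. destruct (Hd i Hi) as [[B1 B2] G]. pose proof (kkt_d_lt_K p d s i Hk Hi).
    assert (0 < p * (K - d i)) by (apply Rmult_lt_0_compat; lra).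
    apply (consumer_best_response _ _ i Hi);
      [unfold bid_d; apply Rmult_le_pos; lra | rewrite Htot; unfold bid_d; lra |].
    rewrite (dalloc_bids p d s Hk), (price_bids p d s Hk). exact G.
  - intros j Hj. destruct (Hs j Hj) as [[B1 B2] G].
    assert (0 < p * (L + s j)) by (apply Rmult_lt_0_compat; lra).
    apply (supplier_best_response _ _ j Hj);
      [unfold bid_s; apply Rmult_le_pos; lra | rewrite Htot; unfold bid_s; lra |].
    rewrite (salloc_bids p d s Hk), (price_bids p d s Hk). exact G.
Qed.

Lemma NE_eq_bids a b p d s : is_NE M N d0 k0 U C a b -> kkt p d s ->
  (forall i, (i < M)%nat -> a i = bid_d p d i) /\ (forall j, (j < N)%nat -> b j = bid_s p s j).
Proof.
  intros HNE Hk. pose proof (NE_total_pos a b HNE) as Htot. pose proof (price_pos a b Htot).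
  destruct (market_kkt_unique _ _ _ _ _ _ (NE_kkt a b HNE) Hk) as [<- [Ed Es]].
  split.
  - intros i Hi. unfold bid_d. rewrite <- (Ed i Hi), dalloc_eq by exact Htot. field. lra.
  - intros j Hj. unfold bid_s. rewrite <- (Es j Hj), salloc_eq by exact Htot. field. lra.
Qed.

Definition Ut (i : nat) : R -> R := Utl (U i) (U' i) d0 K.
Definition Ct (j : nat) : R -> R := Ctl (C j) L.

Lemma objective_welfare d s : (forall i, (i < M)%nat -> d0 <= d i) ->
  objective M N d0 k0 U C d s = welfare M N Ut Ct d s.
Proof.
  intros Hd. unfold objective, welfare. f_equal. apply sumR_ext. intros i Hi.
  apply (Utl_eq (U i) (U' i) d0 K), Hd, Hi.
Qed.

Lemma feasible_d_le_K d s : feasible M N d0 k0 d s -> forall i, (i < M)%nat -> d i <= K.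
Proof.
  intros [HS [Hs Hd]] i Hi.
  pose proof (sumR_ge_term_lb M d d0 i Hd Hi).
  assert (sumR N s <= sumR N (fun _ => k0)) by (apply sumR_le; intros j Hj; apply Hs, Hj).
  rewrite sumR_const in H0. lra.
Qed.

Lemma kkt_feasible p d s : kkt p d s -> feasible M N d0 k0 d s.
Proof.
  intros [_ [HS [Hd Hs]]]. split; [exact HS | split].
  - intros j Hj. apply (Hs j Hj).
  - intros i Hi. apply (Hd i Hi).
Qed.

Lemma kkt_objective_max p d s d' s' : kkt p d s -> feasible M N d0 k0 d' s' ->
  objective M N d0 k0 U C d' s' <= objective M N d0 k0 U C d s /\
  (objective M N d0 k0 U C d' s' = objective M N d0 k0 U C d s ->
     (forall i, (i < M)%nat -> d' i = d i) /\ (forall j, (j < N)%nat -> s' j = s j)).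
Proof.
  intros Hk Hf'. pose proof Hf' as [HS' [Hs' Hd']].
  destruct (kkt_feasible p d s Hk) as [_ [_ Hd]].
  rewrite (objective_welfare d' s' Hd'), (objective_welfare d s Hd).
  apply (kkt_welfare_max M N d0 K k0 margU margC Ut Ct margU_decr margC_incr) with (p := p);
    try assumption.
  - intros i Hi x _. exact (Utl_deriv (U i) (U' i) d0 D K Hd0 D_pos K_eq (HU' i Hi) x).
  - intros j Hj x _. exact (Ctl_deriv (C j) L L_pos (HC_C1 j Hj) x).
  - intros i Hi. split; [apply Hd', Hi | apply (feasible_d_le_K d' s' Hf' i Hi)].
Qed.

Lemma kkt_optimal p d s : kkt p d s -> is_optimal M N d0 k0 U C d s.
Proof.
  intros Hk. split; [exact (kkt_feasible p d s Hk)|].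
  intros d' s' Hf'. exact (proj1 (kkt_objective_max p d s d' s' Hk Hf')).
Qed.

Lemma kkt_optimal_unique p d s d' s' : kkt p d s -> is_optimal M N d0 k0 U C d' s' ->
  (forall i, (i < M)%nat -> d' i = d i) /\ (forall j, (j < N)%nat -> s' j = s j).
Proof.
  intros Hk [Hf' Hmax].
  destruct (kkt_objective_max p d s d' s' Hk Hf') as [Hle Heq].
  apply Heq. pose proof (Hmax d s (kkt_feasible p d s Hk)). lra.
Qed.

End Market.

Theorem theorem2 (M N : nat) (d0 k0 : R) (U C : nat -> R -> R)
  (HM : (1 <= M)%nat) (HN : (1 <= N)%nat)
  (Hd0 : 0 < d0) (Hk0 : 0 < k0)
  (Hcap : INR M * d0 < INR N * k0)
  (HU_conc : forall i, (i < M)%nat -> concave_on (fun x => d0 <= x) (U i))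
  (HU_incr : forall i, (i < M)%nat -> strict_incr_on (fun x => d0 <= x) (U i))
  (HU_C1 : forall i, (i < M)%nat -> C1_on_halfline d0 (U i))
  (HU_0 : forall i, (i < M)%nat -> U i d0 = 0)
  (HC_conv : forall i, (i < N)%nat -> convex_on (fun _ => True) (C i))
  (HC_incr : forall i, (i < N)%nat -> strict_incr_on (fun x => 0 <= x) (C i))
  (HC_C1 : forall i, (i < N)%nat -> C1_on_R (C i))
  (HC_nn : forall i, (i < N)%nat -> forall s, 0 <= s -> 0 <= C i s)
  (HC_0 : forall i, (i < N)%nat -> forall s, s <= 0 -> C i s = 0)
  (Hnopiv : (INR N - 1) * k0 / (INR M * d0) > 1) :
  exists thd ths : nat -> R,
    is_NE M N d0 k0 U C thd ths /\
    (forall thd' ths', is_NE M N d0 k0 U C thd' ths' ->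
        (forall i, (i < M)%nat -> thd' i = thd i) /\
        (forall i, (i < N)%nat -> ths' i = ths i)) /\
    is_optimal M N d0 k0 U C (dalloc M N d0 k0 thd ths) (salloc M N d0 k0 thd ths) /\
    (forall d s, is_optimal M N d0 k0 U C d s ->
        (forall i, (i < M)%nat -> d i = dalloc M N d0 k0 thd ths i) /\
        (forall i, (i < N)%nat -> s i = salloc M N d0 k0 thd ths i)).
Proof.
  destruct (finite_choice (fun _ => 0) M (fun i => C1_halfline_deriv d0 (U i)) HU_C1) as [U' HU'].
  destruct (market_kkt_exists M N d0 k0 U U' C) as (p & d & s & Hk); auto.
  exists (bid_d d0 p d), (bid_s k0 p s).
  erewrite (dalloc_bids M N d0 k0 U' C), (salloc_bids M N d0 k0 U' C) by eauto.
  split; [|split; [|split]].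
  - eapply (kkt_NE M N d0 k0 U U' C); eauto.
  - intros a b HNE. eapply (NE_eq_bids M N d0 k0 U U' C); eauto.
  - eapply (kkt_optimal M N d0 k0 U U' C); eauto.
  - intros d' s' Hopt. eapply (kkt_optimal_unique M N d0 k0 U U' C); eauto.
Qed.
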